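(* Let $f=f^\alpha$ be a developable strip along an arc-length parametrized $C^\infty$ embedded curve $\mathbf c:I\to\mathbb R^3$ with curvature $\kappa>0$, and let $\check f$ be its dual. Let $$S:=\{(t,v)\in\Omega_\epsilon:\ \exists\,(t',v')\in\Omega_\epsilon\setminus\{(t,v)\}\text{ with }\phi_f(t,v)=\psi_f(t',v')\},$$ where $\Omega_\epsilon=I\times(-\epsilon,\epsilon)$. Then for sufficiently small $\epsilon>0$, the set $S$ has no interior points.
   Context: Space curves. For a $C^\infty$ curve $\mathbf c:I\to\mathbb R^3$, $I=[a,b]$, parametrized by arc length with curvature $\kappa=|\mathbf c''|>0$, set $\mathbf e=\mathbf c'$, $\mathbf n=\mathbf c''/\kappa$, $\mathbf b=\mathbf e\times\mathbf n$, and torsion $\tau:=\mathbf n'\cdot\mathbf b$. Developable strips. Given $C^\infty$ functions $\alpha,\beta$ on $I$ with $0<|\alpha(t)|<\pi/2$ and $0<\beta(t)<\pi$, the ruled surface is $f(t,v)=\mathbf c(t)+v\,\xi(t)$, $(t,v)\in I\times(-\epsilon,\epsilon)$, with $\xi=\cos\beta\,\mathbf e+\sin\beta(\cos\alpha\,\mathbf n+\sin\alpha\,\mathbf b)$; $\alpha$ is the first angular function. $f$ is developable iff $\cot\beta=(\alpha'+\tau)/(\kappa\sin\alpha)$; the developable strip with first angular function $\alpha$ is denoted $f^\alpha$. The dual of $f=f^\alpha$ is $\check f:=f^{-\alpha}$. Origami maps. $\phi_f(t,v)=f(t,v)$ for $v\ge0$ and $\phi_f(t,v)=\check f(t,v)$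 for $v<0$; $\psi_f(t,v)=\check f(t,v)$ for $v\ge0$ and $\psi_f(t,v)=f(t,v)$ for $v<0$. *)

From Stdlib Require Import Reals Lra.
Open Scope R_scope.

Record V3 : Type := mkV3 { vx : R; vy : R; vz : R }.

Definition vadd (u w : V3) : V3 := mkV3 (vx u + vx w) (vy u + vy w) (vz u + vz w).
Definition vscale (k : R) (u : V3) : V3 := mkV3 (k * vx u) (k * vy u) (k * vz u).
Definition vdot (u w : V3) : R := vx u * vx w + vy u * vy w + vz u * vz w.
Definition vcross (u w : V3) : V3 :=
  mkV3 (vy u * vz w - vz u * vy w)
       (vz u * vx w - vx u * vz w)
       (vx u * vy w - vy u * vx w).
Definition vnorm (u : V3) : R := sqrt (vdot u u).

Definition inI (a b t : R) : Prop := a <= t <= b.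

Definition deriv_on (a b : R) (g g' : R -> R) : Prop :=
  forall t, inI a b t ->
  forall eps, 0 < eps -> exists delta, 0 < delta /\
    forall h, h <> 0 -> Rabs h < delta -> inI a b (t + h) ->
      Rabs ((g (t + h) - g t) / h - g' t) < eps.

Definition smooth_on (a b : R) (g : R -> R) : Prop :=
  exists D : nat -> R -> R,
    (forall t, inI a b t -> D O t = g t) /\
    (forall k, deriv_on a b (D k) (D (S k))).

Definition vderiv_on (a b : R) (g g' : R -> V3) : Prop :=
  deriv_on a b (fun t => vx (g t)) (fun t => vx (g' t)) /\
  deriv_on a b (fun t => vy (g t)) (fun t => vy (g' t)) /\
  deriv_on a b (fun t => vz (g t)) (fun t => vz (g' t)).

Definition vsmooth_on (a b : R) (g : R -> V3) : Prop :=
  smooth_on a b (fun t => vx (g t)) /\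
  smooth_on a b (fun t => vy (g t)) /\
  smooth_on a b (fun t => vz (g t)).

(* ---------- Frenet data of the curve ----------
   c1 = c', c2 = c'' (supplied with derivative hypotheses in the theorem) *)
Definition curvature (c2 : R -> V3) (t : R) : R := vnorm (c2 t).
Definition frenet_e (c1 : R -> V3) (t : R) : V3 := c1 t.
Definition frenet_n (c2 : R -> V3) (t : R) : V3 := vscale (/ curvature c2 t) (c2 t).
Definition frenet_b (c1 c2 : R -> V3) (t : R) : V3 :=
  vcross (frenet_e c1 t) (frenet_n c2 t).
(* torsion tau := n' . b, where nd is the derivative of n *)
Definition torsion (c1 c2 nd : R -> V3) (t : R) : R := vdot (nd t) (frenet_b c1 c2 t).

Definition ruling (c1 c2 : R -> V3) (al be : R -> R) (t : R) : V3 :=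
  vadd (vscale (cos (be t)) (frenet_e c1 t))
       (vscale (sin (be t))
          (vadd (vscale (cos (al t)) (frenet_n c2 t))
                (vscale (sin (al t)) (frenet_b c1 c2 t)))).

Definition ruled_surface (c c1 c2 : R -> V3) (al be : R -> R) (t v : R) : V3 :=
  vadd (c t) (vscale v (ruling c1 c2 al be t)).

(* The unique beta in (0,pi) with cot beta = (alpha' + tau)/(kappa sin alpha):
   beta = pi/2 - atan((alpha' + tau)/(kappa sin alpha)). *)
Definition dev_beta (c1 c2 nd : R -> V3) (al ald : R -> R) (t : R) : R :=
  PI / 2 - atan ((ald t + torsion c1 c2 nd t) / (curvature c2 t * sin (al t))).

(* f^alpha : developable strip with first angular function alpha (ald = alpha') *)
Definition dev_strip (c c1 c2 nd : R -> V3) (al ald : R -> R) (t v : R) : V3 :=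
  ruled_surface c c1 c2 al (dev_beta c1 c2 nd al ald) t v.

Definition dual_strip (c c1 c2 nd : R -> V3) (al ald : R -> R) (t v : R) : V3 :=
  dev_strip c c1 c2 nd (fun s => - al s) (fun s => - ald s) t v.

Definition phi_map (c c1 c2 nd : R -> V3) (al ald : R -> R) (t v : R) : V3 :=
  if Rle_dec 0 v then dev_strip c c1 c2 nd al ald t v
  else dual_strip c c1 c2 nd al ald t v.

Definition psi_map (c c1 c2 nd : R -> V3) (al ald : R -> R) (t v : R) : V3 :=
  if Rle_dec 0 v then dual_strip c c1 c2 nd al ald t v
  else dev_strip c c1 c2 nd al ald t v.

Definition in_Omega (a b eps t v : R) : Prop := inI a b t /\ - eps < v < eps.

Definition S_set (a b eps : R) (c c1 c2 nd : R -> V3) (al ald : R -> R) (t v : R) : Prop :=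
  in_Omega a b eps t v /\
  exists t' v', in_Omega a b eps t' v' /\ (t', v') <> (t, v) /\
    phi_map c c1 c2 nd al ald t v = psi_map c c1 c2 nd al ald t' v'.

Definition interior_point (P : R -> R -> Prop) (t v : R) : Prop :=
  exists r, 0 < r /\ forall t' v', sqrt ((t' - t)^2 + (v' - v)^2) < r -> P t' v'.

(* For small [eps] the set [S] is in fact empty.  Write [e = c'] and [xi], [xi_dual] for the
   rulings of [f] and of its dual.  A coincidence [c t + v U t = c t' + v' W t'] with
   [U, W] among [xi, xi_dual] and [|v|, |v'| < eps] forces [t'] close to [t], because [c] is
   embedded; then, [c] being uniformly differentiable and [W] uniformly continuous,
   [(t' - t) e + v' W t - v U t] is small compared with [|t' - t| + |v'|].  When [U <> W] this
   contradicts the independence of [e], [xi], [xi_dual], whose determinant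
   [-2 sin β sin β' sin α cos α] is bounded away from 0 on [I]; when [U = W] the signs of [v]
   and [v'] differ, contradicting the independence of [e] and [U] ([|e × U|] = [sin β] > 0).
   The uniform bounds need [β] continuous, which follows from [τ = c''' · b / κ]. *)

From Stdlib Require Import Reals Lra Psatz ClassicalEpsilon.
From Coquelicot Require Import Coquelicot.
Open Scope R_scope.

(** * Vector estimates in R^3 *)

Definition vsub (u w : V3) : V3 := mkV3 (vx u - vx w) (vy u - vy w) (vz u - vz w).

(* The l1 norm, and the sup-norm bound [vbounded K u]: cheaper to handle than [vnorm]. *)
Definition vnorm1 (u : V3) : R := Rabs (vx u) + Rabs (vy u) + Rabs (vz u).
Definition vbounded (K : R) (u : V3) : Prop :=
  Rabs (vx u) <= K /\ Rabs (vy u) <= K /\ Rabs (vz u) <= K.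

Lemma vnorm1_ge0 u : 0 <= vnorm1 u.
Proof.
  unfold vnorm1; pose proof (Rabs_pos (vx u)); pose proof (Rabs_pos (vy u));
  pose proof (Rabs_pos (vz u)); lra.
Qed.

Lemma vnorm1_sub_triangle u v w : vnorm1 (vsub u w) <= vnorm1 (vsub u v) + vnorm1 (vsub v w).
Proof.
  unfold vnorm1, vsub; simpl.
  pose proof (Rabs_triang (vx u - vx v) (vx v - vx w)).
  pose proof (Rabs_triang (vy u - vy v) (vy v - vy w)).
  pose proof (Rabs_triang (vz u - vz v) (vz v - vz w)).
  replace (vx u - vx v + (vx v - vx w)) with (vx u - vx w) in * by ring.
  replace (vy u - vy v + (vy v - vy w)) with (vy u - vy w) in * by ring.
  replace (vz u - vz v + (vz v - vz w)) with (vz u - vz w) in * by ring.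
  lra.
Qed.

Lemma vnorm1_sub_gt0 u w : u <> w -> 0 < vnorm1 (vsub u w).
Proof.
  intros Huw. destruct (Rle_lt_dec (vnorm1 (vsub u w)) 0) as [H|H]; [exfalso|exact H].
  apply Huw. destruct u as [x y z], w as [x' y' z']. unfold vnorm1, vsub in H; simpl in H.
  pose proof (Rabs_pos (x - x')); pose proof (Rabs_pos (y - y')); pose proof (Rabs_pos (z - z')).
  assert (Ex : Rabs (x - x') = 0) by lra. assert (Ey : Rabs (y - y') = 0) by lra.
  assert (Ez : Rabs (z - z') = 0) by lra.
  apply Rabs_eq_0 in Ex, Ey, Ez. f_equal; lra.
Qed.

Lemma vdot_self_ge0 u : 0 <= vdot u u.
Proof. unfold vdot; nra. Qed.

Lemma vdot_bounded K u y : vbounded K u -> Rabs (vdot u y) <= K * vnorm1 y.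
Proof.
  intros [H1 [H2 H3]]. unfold vdot, vnorm1.
  assert (Hm : forall p q, Rabs p <= K -> Rabs (p * q) <= K * Rabs q)
    by (intros p q Hp; rewrite Rabs_mult; apply Rmult_le_compat_r; auto using Rabs_pos).
  pose proof (Hm _ (vx y) H1). pose proof (Hm _ (vy y) H2). pose proof (Hm _ (vz y) H3).
  pose proof (Rabs_triang (vx u * vx y + vy u * vy y) (vz u * vz y)).
  pose proof (Rabs_triang (vx u * vx y) (vy u * vy y)). lra.
Qed.

Lemma vunit_bounded u : vdot u u = 1 -> vbounded 1 u.
Proof. unfold vdot, vbounded; intros H; repeat split; apply Rabs_le; nra. Qed.

Lemma Rabs_mul_sub_le p q r s :
  Rabs p <= 1 -> Rabs r <= 1 -> Rabs (p * q - r * s) <= Rabs q + Rabs s.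
Proof.
  intros Hp Hr. unfold Rminus. eapply Rle_trans; [apply Rabs_triang|].
  rewrite Rabs_Ropp, !Rabs_mult.
  pose proof (Rabs_pos q); pose proof (Rabs_pos s); pose proof (Rabs_pos p); pose proof (Rabs_pos r). nra.
Qed.

Lemma vcross_bounded u w : vbounded 1 u -> vbounded 1 w -> vbounded 2 (vcross u w).
Proof.
  intros [U1 [U2 U3]] [W1 [W2 W3]]. unfold vbounded, vcross; simpl.
  repeat split; (eapply Rle_trans; [apply Rabs_mul_sub_le; assumption|]); lra.
Qed.

Lemma vnorm1_cross u y : vbounded 1 u -> vnorm1 (vcross u y) <= 2 * vnorm1 y.
Proof.
  intros [U1 [U2 U3]]. unfold vnorm1, vcross; simpl.
  pose proof (Rabs_mul_sub_le (vy u) (vz y) (vz u) (vy y) U2 U3).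
  pose proof (Rabs_mul_sub_le (vz u) (vx y) (vx u) (vz y) U3 U1).
  pose proof (Rabs_mul_sub_le (vx u) (vy y) (vy u) (vx y) U1 U2). lra.
Qed.

Lemma vcross_dot_self u w : vdot (vcross u w) (vcross u w) = vdot u u * vdot w w - (vdot u w)^2.
Proof. destruct u, w; unfold vdot, vcross; simpl; ring. Qed.

Lemma vtriple_swap u x y : vdot (vcross u y) x = - vdot (vcross u x) y.
Proof. destruct u, x, y; unfold vdot, vcross; simpl; ring. Qed.

(* Cramer's rule: dotting with [U × W], [E × U], [W × E] isolates [s], [p], [q]. *)
Lemma vcoords3_bound E U W s p q m :
  vbounded 1 E -> vbounded 1 U -> vbounded 1 W -> m <= Rabs (vdot (vcross E U) W) ->
  m * (Rabs s + Rabs p + Rabs q)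
  <= 6 * vnorm1 (vadd (vscale s E) (vadd (vscale p W) (vscale q U))).
Proof.
  intros HE HU HW Hm.
  set (y := vadd (vscale s E) (vadd (vscale p W) (vscale q U))).
  set (D := vdot (vcross E U) W) in *.
  assert (Ds : vdot (vcross U W) y = s * D)
    by (unfold y, D; destruct E, U, W; unfold vdot, vcross, vadd, vscale; simpl; ring).
  assert (Dp : vdot (vcross E U) y = p * D)
    by (unfold y, D; destruct E, U, W; unfold vdot, vcross, vadd, vscale; simpl; ring).
  assert (Dq : vdot (vcross W E) y = q * D)
    by (unfold y, D; destruct E, U, W; unfold vdot, vcross, vadd, vscale; simpl; ring).
  pose proof (vdot_bounded 2 _ y (vcross_bounded _ _ HU HW)) as Bs.
  pose proof (vdot_bounded 2 _ y (vcross_bounded _ _ HE HU)) as Bp.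
  pose proof (vdot_bounded 2 _ y (vcross_bounded _ _ HW HE)) as Bq.
  rewrite Ds, Rabs_mult in Bs. rewrite Dp, Rabs_mult in Bp. rewrite Dq, Rabs_mult in Bq.
  pose proof (Rabs_pos s); pose proof (Rabs_pos p); pose proof (Rabs_pos q).
  assert (Rabs s * m <= Rabs s * Rabs D) by (apply Rmult_le_compat_l; lra).
  assert (Rabs p * m <= Rabs p * Rabs D) by (apply Rmult_le_compat_l; lra).
  assert (Rabs q * m <= Rabs q * Rabs D) by (apply Rmult_le_compat_l; lra).
  lra.
Qed.

(* [(E × U) · (E × y)] isolates [r], and then [E · y] controls [s]. *)
Lemma vcoords2_bound E U s r m :
  vbounded 1 U -> vdot E E = 1 -> Rabs (vdot E U) <= 1 ->
  0 <= m -> m <= vdot (vcross E U) (vcross E U) ->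
  m * (Rabs s + Rabs r) <= (m + 8) * vnorm1 (vadd (vscale s E) (vscale r U)).
Proof.
  intros HU HEE HEU Hm0 Hm. pose proof (vunit_bounded E HEE) as HE.
  set (y := vadd (vscale s E) (vscale r U)).
  set (G := vdot (vcross E U) (vcross E U)) in *.
  assert (Dr : vdot (vcross E U) (vcross E y) = r * G)
    by (unfold y, G; destruct E, U; unfold vdot, vcross, vadd, vscale; simpl; ring).
  assert (Ds : vdot E y = s * vdot E E + r * vdot E U)
    by (unfold y; destruct E, U; unfold vdot, vadd, vscale; simpl; ring).
  rewrite HEE, Rmult_1_r in Ds.
  pose proof (vdot_bounded 2 _ (vcross E y) (vcross_bounded _ _ HE HU)) as Br.
  pose proof (vnorm1_cross E y HE). pose proof (vdot_bounded 1 E y HE) as Bs.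
  rewrite Dr, Rabs_mult, (Rabs_pos_eq G) in Br by (unfold G; apply vdot_self_ge0).
  rewrite Ds in Bs.
  pose proof (Rabs_pos s); pose proof (Rabs_pos r); pose proof (vnorm1_ge0 y).
  assert (Hr : m * Rabs r <= 4 * vnorm1 y).
  { assert (Rabs r * m <= Rabs r * G) by (apply Rmult_le_compat_l; lra). lra. }
  assert (Hs : Rabs s <= vnorm1 y + Rabs r).
  { pose proof (Rabs_triang (s + r * vdot E U) (- (r * vdot E U))) as T.
    rewrite Rabs_Ropp in T. replace (s + r * vdot E U + - (r * vdot E U)) with s in T by ring.
    rewrite Rabs_mult in T.
    assert (Rabs r * Rabs (vdot E U) <= Rabs r * 1) by (apply Rmult_le_compat_l; lra).
    lra. }
  assert (m * Rabs s <= m * (vnorm1 y + Rabs r)) by (apply Rmult_le_compat_l; lra).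
  lra.
Qed.

Lemma vnorm1_add u w : vnorm1 (vadd u w) <= vnorm1 u + vnorm1 w.
Proof.
  unfold vnorm1, vadd; simpl.
  pose proof (Rabs_triang (vx u) (vx w)); pose proof (Rabs_triang (vy u) (vy w));
  pose proof (Rabs_triang (vz u) (vz w)). lra.
Qed.

Lemma vnorm1_sub u w : vnorm1 (vsub u w) <= vnorm1 u + vnorm1 w.
Proof.
  unfold vnorm1, vsub; simpl.
  pose proof (Rabs_triang (vx u) (- vx w)); pose proof (Rabs_triang (vy u) (- vy w));
  pose proof (Rabs_triang (vz u) (- vz w)). rewrite Rabs_Ropp in *. unfold Rminus. lra.
Qed.

Lemma vnorm1_scale s u : vnorm1 (vscale s u) = Rabs s * vnorm1 u.
Proof. unfold vnorm1, vscale; simpl; rewrite !Rabs_mult; ring. Qed.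

Lemma vnorm1_bounded K u : vbounded K u -> vnorm1 u <= 3 * K.
Proof. intros [? [? ?]]; unfold vnorm1; lra. Qed.

(* Two transversal rulings through nearby points of the curve meet only on the curve. *)
Lemma small_comb3_zero E U W s p q m th :
  vbounded 1 E -> vbounded 1 U -> vbounded 1 W -> m <= Rabs (vdot (vcross E U) W) ->
  0 <= th -> 6 * th < m ->
  vnorm1 (vadd (vscale s E) (vadd (vscale p W) (vscale q U))) <= th * (Rabs s + Rabs p) ->
  s = 0 /\ p = 0 /\ q = 0.
Proof.
  intros HE HU HW Hm Hth0 Hth Hy.
  pose proof (vcoords3_bound E U W s p q m HE HU HW Hm) as B.
  pose proof (Rabs_pos s); pose proof (Rabs_pos p); pose proof (Rabs_pos q).
  set (Z := Rabs s + Rabs p + Rabs q) in *.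
  assert (Hz : Z <= 0).
  { destruct (Rle_lt_dec Z 0) as [|Hpos]; [assumption|].
    assert (th * (Rabs s + Rabs p) <= th * Z) by (apply Rmult_le_compat_l; unfold Z; lra).
    assert (6 * th * Z < m * Z) by (apply Rmult_lt_compat_r; lra). lra. }
  unfold Z in Hz.
  repeat split; apply Rabs_eq_0; lra.
Qed.

(* A ruling meets itself across the curve only trivially. *)
Lemma small_comb2_same_side E U s v v' m th :
  vbounded 1 U -> vdot E E = 1 -> Rabs (vdot E U) <= 1 ->
  0 < m -> m <= vdot (vcross E U) (vcross E U) -> (m + 8) * th < m -> 0 <= th ->
  vnorm1 (vadd (vscale s E) (vadd (vscale v' U) (vscale (- v) U))) <= th * (Rabs s + Rabs v') ->
  ~ (v' < 0 <= v \/ v < 0 <= v').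
Proof.
  intros HU HEE HEU Hm0 Hm Hth Hth0 Hy Hsides.
  replace (vadd (vscale s E) (vadd (vscale v' U) (vscale (- v) U)))
    with (vadd (vscale s E) (vscale (v' - v) U)) in Hy
    by (destruct E, U; unfold vadd, vscale; simpl; f_equal; ring).
  pose proof (vcoords2_bound E U s (v' - v) m HU HEE HEU ltac:(lra) Hm) as B.
  assert (Hv' : Rabs v' <= Rabs (v' - v)) by (unfold Rabs; repeat destruct Rcase_abs; lra).
  pose proof (Rabs_pos s); pose proof (Rabs_pos v'); pose proof (Rabs_pos (v' - v)).
  set (Z := Rabs s + Rabs (v' - v)) in *.
  assert (Hz : Z <= 0).
  { destruct (Rle_lt_dec Z 0) as [|Hpos]; [assumption|].
    assert (th * (Rabs s + Rabs v') <= th * Z) by (apply Rmult_le_compat_l; unfold Z; lra).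
    assert ((m + 8) * th * Z < m * Z) by (apply Rmult_lt_compat_r; lra).
    assert ((m + 8) * vnorm1 (vadd (vscale s E) (vscale (v' - v) U)) <= (m + 8) * (th * Z))
      by (apply Rmult_le_compat_l; lra).
    lra. }
  assert (Hvv : Rabs (v' - v) = 0) by (unfold Z in Hz; lra).
  apply Rabs_eq_0 in Hvv. lra.
Qed.

(* Far-apart parameters are excluded by the separation [del] of the curve; for near ones,
   [c] is approximately affine and [W] approximately constant. *)
Lemma ruled_intersection_linearized (c : R -> V3) (e U W W' : V3) t t' v v' rho del th :
  vbounded 1 U -> vbounded 1 W' ->
  (rho <= Rabs (t - t') -> del <= vnorm1 (vsub (c t) (c t'))) ->
  (Rabs (t' - t) < rho -> vnorm1 (vsub (vsub (c t') (c t)) (vscale (t' - t) e)) <= th * Rabs (t' - t)) ->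
  (Rabs (t' - t) < rho -> vnorm1 (vsub W' W) <= th) ->
  3 * (Rabs v + Rabs v') < del ->
  vadd (c t) (vscale v U) = vadd (c t') (vscale v' W') ->
  vnorm1 (vadd (vscale (t' - t) e) (vadd (vscale v' W) (vscale (- v) U)))
  <= th * (Rabs (t' - t) + Rabs v').
Proof.
  intros HU HW' Hsep Htaylor HW Hdel Heq.
  assert (Ex := f_equal vx Heq); assert (Ey := f_equal vy Heq); assert (Ez := f_equal vz Heq).
  simpl in Ex, Ey, Ez.
  destruct (Rlt_dec (Rabs (t' - t)) rho) as [Hnear|Hfar].
  - set (r := vsub (vsub (c t') (c t)) (vscale (t' - t) e)) in *.
    replace (vadd (vscale (t' - t) e) (vadd (vscale v' W) (vscale (- v) U)))
      with (vadd (vscale (-1) r) (vscale (- v') (vsub W' W)))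
      by (unfold r, vadd, vscale, vsub; simpl; f_equal; lra).
    eapply Rle_trans; [apply vnorm1_add|]. rewrite !vnorm1_scale, Rabs_m1, Rabs_Ropp.
    pose proof (Htaylor Hnear); pose proof (HW Hnear).
    assert (Rabs v' * vnorm1 (vsub W' W) <= Rabs v' * th) by (apply Rmult_le_compat_l; auto using Rabs_pos).
    lra.
  - exfalso.
    assert (Hsep' : del <= vnorm1 (vsub (c t) (c t')))
      by (apply Hsep; rewrite Rabs_minus_sym; lra).
    replace (vsub (c t) (c t')) with (vsub (vscale v' W') (vscale v U)) in Hsep'
      by (unfold vadd, vscale, vsub; simpl; f_equal; lra).
    pose proof (vnorm1_sub (vscale v' W') (vscale v U)) as Htri. rewrite !vnorm1_scale in Htri.
    pose proof (vnorm1_bounded _ _ HU); pose proof (vnorm1_bounded _ _ HW').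
    pose proof (Rabs_pos v); pose proof (Rabs_pos v').
    assert (Rabs v' * vnorm1 W' <= Rabs v' * 3) by (apply Rmult_le_compat_l; lra).
    assert (Rabs v * vnorm1 U <= Rabs v * 3) by (apply Rmult_le_compat_l; lra).
    lra.
Qed.

Lemma small_threshold m1 m2 : 0 < m1 -> 0 < m2 ->
  exists th, 0 < th /\ 6 * th < m2 /\ (m1 + 8) * th < m1.
Proof.
  intros Hm1 Hm2. exists (Rmin (m2 / 7) (m1 / (2 * (m1 + 8)))).
  pose proof (Rmin_l (m2 / 7) (m1 / (2 * (m1 + 8)))) as Hl.
  pose proof (Rmin_r (m2 / 7) (m1 / (2 * (m1 + 8)))) as Hr.
  split; [apply Rmin_pos; apply Rdiv_lt_0_compat; lra|split; [lra|]].
  apply Rle_lt_trans with ((m1 + 8) * (m1 / (2 * (m1 + 8)))); [apply Rmult_le_compat_l; lra|].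
  replace ((m1 + 8) * (m1 / (2 * (m1 + 8)))) with (m1 / 2) by (field; lra). lra.
Qed.

(** * Rulings in an orthonormal frame *)

Definition frame_vec (e n : V3) (A S C Z : R) : V3 :=
  vadd (vscale A e) (vscale S (vadd (vscale C n) (vscale Z (vcross e n)))).

Section OrthonormalFrame.
Variables (e n : V3).
Hypotheses (Hee : vdot e e = 1) (Hnn : vdot n n = 1) (Hen : vdot e n = 0).

Lemma frame_vec_dot_self A S C Z :
  vdot (frame_vec e n A S C Z) (frame_vec e n A S C Z) = A ^ 2 + S ^ 2 * (C ^ 2 + Z ^ 2).
Proof.
  transitivity (A ^ 2 * vdot e e + 2 * A * S * C * vdot e n + S ^ 2 * C ^ 2 * vdot n n
     + S ^ 2 * Z ^ 2 * (vdot e e * vdot n n - (vdot e n) ^ 2)).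
  - destruct e, n; unfold frame_vec, vdot, vadd, vscale, vcross; simpl; ring.
  - rewrite Hee, Hnn, Hen; ring.
Qed.

Lemma frame_vec_dot_e A S C Z : vdot e (frame_vec e n A S C Z) = A.
Proof.
  transitivity (A * vdot e e + S * C * vdot e n).
  - destruct e, n; unfold frame_vec, vdot, vadd, vscale, vcross; simpl; ring.
  - rewrite Hee, Hen; ring.
Qed.

Lemma frame_vec_triple A S C Z A' S' C' Z' :
  vdot (vcross e (frame_vec e n A S C Z)) (frame_vec e n A' S' C' Z')
  = S * S' * (C * Z' - Z * C').
Proof.
  transitivity (S * S' * (C * Z' - Z * C') * (vdot e e * vdot n n - (vdot e n) ^ 2)).
  - destruct e, n; unfold frame_vec, vdot, vadd, vscale, vcross; simpl; ring.
  - rewrite Hee, Hnn, Hen; ring.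
Qed.
End OrthonormalFrame.

(** * Calculus on a compact interval *)

Lemma continuity_pt_intro f x :
  (forall eps, 0 < eps -> exists d, 0 < d /\ forall y, Rabs (y - x) < d -> Rabs (f y - f x) < eps) ->
  continuity_pt f x.
Proof.
  intros H eps Heps. destruct (H eps Heps) as [d [Hd K]].
  exists d; split; [lra|]. intros y [_ Hy]. apply K, Hy.
Qed.

Lemma limit1_in_ext f g D l x :
  (forall h, D h -> f h = g h) -> limit1_in f D l x -> limit1_in g D l x.
Proof.
  intros E H eps Heps. destruct (H eps Heps) as [d [Hd K]].
  exists d; split; auto. intros y [Dy Hy]. rewrite <- E by exact Dy. apply K; auto.
Qed.

Lemma Rmax_0_lipschitz u w : Rabs (Rmax 0 u - Rmax 0 w) <= Rabs (u - w).
Proof. unfold Rmax; repeat destruct Rle_dec; unfold Rabs; repeat destruct Rcase_abs; lra. Qed.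

Lemma continuity_Rmax_0 : continuity (fun u => Rmax 0 u).
Proof.
  intros x. apply continuity_pt_intro. intros eps Heps. exists eps; split; auto.
  intros y Hy. pose proof (Rmax_0_lipschitz y x). lra.
Qed.

Lemma limit1_in_const (k : R) D x0 : limit1_in (fun _ => k) D k x0.
Proof. exact (limit_free (fun _ => k) D 0 x0). Qed.

Lemma continuity_atan : continuity atan.
Proof. intros x; apply derivable_continuous_pt, derivable_pt_atan. Qed.

Lemma sin_cos_neq0 x : 0 < Rabs x < PI / 2 -> sin x <> 0 /\ 0 < cos x.
Proof.
  intros [H0 H1]. pose proof PI_RGT_0.
  assert (- (PI / 2) < x < PI / 2) by (unfold Rabs in H1; destruct Rcase_abs; lra).
  split; [|apply cos_gt_0; lra].
  destruct (Rlt_dec 0 x).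
  - pose proof (sin_gt_0 x ltac:(lra) ltac:(lra)); lra.
  - assert (x < 0) by (unfold Rabs in H0; destruct Rcase_abs; lra).
    pose proof (sin_gt_0 (- x) ltac:(lra) ltac:(lra)) as Hs. rewrite sin_neg in Hs; lra.
Qed.

Definition clamp (a b t : R) : R := Rmax a (Rmin b t).

(* Continuity on [a,b], expressed through the constant extension [f ∘ clamp a b]. *)
Definition cont_on (a b : R) (f : R -> R) : Prop :=
  forall x, continuity_pt (fun s => f (clamp a b s)) x.

Definition vcont_on (a b : R) (F : R -> V3) : Prop :=
  cont_on a b (fun t => vx (F t)) /\ cont_on a b (fun t => vy (F t)) /\
  cont_on a b (fun t => vz (F t)).

Definition step_dom (a b t h : R) : Prop := h <> 0 /\ inI a b (t + h).

Section Interval.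
Variables a b : R.

Lemma clamp_id t : inI a b t -> clamp a b t = t.
Proof. unfold inI, clamp, Rmax, Rmin; intros; repeat destruct Rle_dec; lra. Qed.

Lemma clamp_lipschitz x y : Rabs (clamp a b x - clamp a b y) <= Rabs (x - y).
Proof. unfold clamp, Rmax, Rmin; repeat destruct Rle_dec; unfold Rabs; repeat destruct Rcase_abs; lra. Qed.

Hypothesis Hab : a < b.

Lemma clamp_inI t : inI a b (clamp a b t).
Proof. unfold clamp, inI, Rmax, Rmin; repeat destruct Rle_dec; lra. Qed.

Lemma cont_on_ext f g : (forall t, inI a b t -> f t = g t) -> cont_on a b f -> cont_on a b g.
Proof.
  intros E Hf x. apply (continuity_pt_ext (fun s => f (clamp a b s))); [|apply Hf].
  intros s; apply E, clamp_inI.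
Qed.

Lemma cont_on_const k : cont_on a b (fun _ => k).
Proof. intros x; apply continuity_pt_const; intros ? ?; reflexivity. Qed.

Lemma cont_on_plus f g : cont_on a b f -> cont_on a b g -> cont_on a b (fun t => f t + g t).
Proof. intros Hf Hg x; apply continuity_pt_plus; auto. Qed.

Lemma cont_on_minus f g : cont_on a b f -> cont_on a b g -> cont_on a b (fun t => f t - g t).
Proof. intros Hf Hg x; apply continuity_pt_minus; auto. Qed.

Lemma cont_on_mult f g : cont_on a b f -> cont_on a b g -> cont_on a b (fun t => f t * g t).
Proof. intros Hf Hg x; apply continuity_pt_mult; auto. Qed.

Lemma cont_on_opp f : cont_on a b f -> cont_on a b (fun t => - f t).
Proof. intros Hf x; apply continuity_pt_opp; auto. Qed.

Lemma cont_on_inv f : cont_on a b f -> (forall t, inI a b t -> f t <> 0) ->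
  cont_on a b (fun t => / f t).
Proof. intros Hf Hf0 x; apply continuity_pt_inv; auto using clamp_inI. Qed.

Lemma cont_on_div f g : cont_on a b f -> cont_on a b g -> (forall t, inI a b t -> g t <> 0) ->
  cont_on a b (fun t => f t / g t).
Proof. intros Hf Hg Hg0 x; apply continuity_pt_div; auto using clamp_inI. Qed.

Lemma cont_on_comp h f : continuity h -> cont_on a b f -> cont_on a b (fun t => h (f t)).
Proof. intros Hh Hf x; apply (continuity_pt_comp (fun s => f (clamp a b s))); auto. Qed.

Lemma cont_on_sqrt f : cont_on a b f -> (forall t, inI a b t -> 0 <= f t) ->
  cont_on a b (fun t => sqrt (f t)).
Proof.
  intros Hf Hf0 x. apply (continuity_pt_comp (fun s => f (clamp a b s))); auto.
  apply continuity_pt_sqrt, Hf0, clamp_inI.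
Qed.

Lemma vcont_on_add F G : vcont_on a b F -> vcont_on a b G -> vcont_on a b (fun t => vadd (F t) (G t)).
Proof. intros [? [? ?]] [? [? ?]]; repeat split; apply cont_on_plus; auto. Qed.

Lemma vcont_on_scale f F : cont_on a b f -> vcont_on a b F -> vcont_on a b (fun t => vscale (f t) (F t)).
Proof. intros ? [? [? ?]]; repeat split; apply cont_on_mult; auto. Qed.

Lemma vcont_on_cross F G : vcont_on a b F -> vcont_on a b G -> vcont_on a b (fun t => vcross (F t) (G t)).
Proof. intros [? [? ?]] [? [? ?]]; repeat split; apply cont_on_minus; apply cont_on_mult; auto. Qed.

Lemma cont_on_vdot F G : vcont_on a b F -> vcont_on a b G -> cont_on a b (fun t => vdot (F t) (G t)).
Proof. intros [? [? ?]] [? [? ?]]; repeat apply cont_on_plus; apply cont_on_mult; auto. Qed.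

Lemma clamp_continuous x : continuity_pt (clamp a b) x.
Proof.
  apply continuity_pt_intro. intros eps Heps. exists eps; split; auto.
  intros y Hy. pose proof (clamp_lipschitz y x). lra.
Qed.

Lemma cont_on_argmin f : cont_on a b f -> exists m, inI a b m /\ forall s, inI a b s -> f m <= f s.
Proof.
  intros Hf.
  destruct (continuity_ab_min (fun s => f (clamp a b s)) a b (Rlt_le _ _ Hab) (fun x _ => Hf x))
    as [t [Hmin Ht]].
  exists t; split; [exact Ht|]. intros s Hs.
  pose proof (Hmin s Hs) as K. rewrite (clamp_id s Hs), (clamp_id t Ht) in K. exact K.
Qed.

Lemma cont_on_pos_lower_bound f : cont_on a b f -> (forall t, inI a b t -> 0 < f t) ->
  exists m, 0 < m /\ forall t, inI a b t -> m <= f t.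
Proof.
  intros Hf Hpos. destruct (cont_on_argmin f Hf) as [t [Ht Hmin]].
  exists (f t); split; auto.
Qed.

Lemma cont_on_unif f : cont_on a b f -> forall eps, 0 < eps -> exists rho, 0 < rho /\
  forall t t', inI a b t -> inI a b t' -> Rabs (t' - t) < rho -> Rabs (f t' - f t) < eps.
Proof.
  intros Hf eps Heps.
  destruct (Heine_cor2 (fun x (_ : a <= x <= b) => Hf x) (mkposreal eps Heps)) as [rho Hrho].
  exists rho; split; [apply cond_pos|]. intros t t' Ht Ht' Htt.
  pose proof (Hrho t' t Ht' Ht Htt) as K. simpl in K. rewrite !clamp_id in K; auto.
Qed.

Lemma vcont_on_unif F : vcont_on a b F -> forall eps, 0 < eps -> exists rho, 0 < rho /\
  forall t t', inI a b t -> inI a b t' -> Rabs (t' - t) < rho -> vnorm1 (vsub (F t') (F t)) <= eps.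
Proof.
  intros [Hx [Hy Hz]] eps Heps.
  destruct (cont_on_unif _ Hx (eps / 3)) as [r1 [Hr1 K1]]; [lra|].
  destruct (cont_on_unif _ Hy (eps / 3)) as [r2 [Hr2 K2]]; [lra|].
  destruct (cont_on_unif _ Hz (eps / 3)) as [r3 [Hr3 K3]]; [lra|].
  exists (Rmin r1 (Rmin r2 r3)). split; [repeat apply Rmin_pos; auto|].
  intros t t' Ht Ht' Htt.
  pose proof (Rmin_l r1 (Rmin r2 r3)); pose proof (Rmin_r r1 (Rmin r2 r3)).
  pose proof (Rmin_l r2 r3); pose proof (Rmin_r r2 r3).
  pose proof (K1 t t' Ht Ht' ltac:(lra)); pose proof (K2 t t' Ht Ht' ltac:(lra)).
  pose proof (K3 t t' Ht Ht' ltac:(lra)).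
  unfold vnorm1, vsub; simpl; lra.
Qed.

Lemma deriv_on_limit g g' t : deriv_on a b g g' -> inI a b t ->
  limit1_in (fun h => (g (t + h) - g t) / h) (step_dom a b t) (g' t) 0.
Proof.
  intros Hg Ht eps Heps. destruct (Hg t Ht eps Heps) as [d [Hd K]].
  exists d; split; [exact Hd|]. intros h [[Hh0 Hh] Hd'].
  change (Rabs (h - 0) < d) in Hd'. rewrite Rminus_0_r in Hd'. apply K; auto.
Qed.

Lemma cont_on_limit g t : cont_on a b g -> inI a b t ->
  limit1_in (fun h => g (t + h)) (step_dom a b t) (g t) 0.
Proof.
  intros Hg Ht eps Heps. destruct (Hg t eps Heps) as [d [Hd K]].
  exists d; split; auto. intros h [[Hh0 Hh] Hd']. change R in h.
  change (Rabs (h - 0) < d) in Hd'. rewrite Rminus_0_r in Hd'.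
  assert (Kh : Rabs (g (clamp a b (t + h)) - g (clamp a b t)) < eps).
  { apply K. split; [split; [exact I|lra]|].
    change (Rabs (t + h - t) < d). replace (t + h - t) with h by ring. exact Hd'. }
  rewrite (clamp_id (t + h) Hh), (clamp_id t Ht) in Kh. exact Kh.
Qed.

Lemma step_dom_adh t : inI a b t -> adhDa (step_dom a b t) 0.
Proof.
  unfold inI, step_dom; intros Ht d Hd; unfold Rdist.
  destruct (Rlt_dec t b).
  - exists (Rmin (d / 2) (b - t)).
    pose proof (Rmin_l (d / 2) (b - t)); pose proof (Rmin_r (d / 2) (b - t)).
    assert (0 < Rmin (d / 2) (b - t)) by (apply Rmin_pos; lra).
    rewrite Rminus_0_r, Rabs_pos_eq; [repeat split; lra|lra].
  - exists (- Rmin (d / 2) (t - a)).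
    pose proof (Rmin_l (d / 2) (t - a)); pose proof (Rmin_r (d / 2) (t - a)).
    assert (0 < Rmin (d / 2) (t - a)) by (apply Rmin_pos; lra).
    rewrite Rminus_0_r, Rabs_Ropp, Rabs_pos_eq; [repeat split; lra|lra].
Qed.

Lemma deriv_on_unique g g1 g2 t : deriv_on a b g g1 -> deriv_on a b g g2 -> inI a b t -> g1 t = g2 t.
Proof.
  intros H1 H2 Ht. apply (single_limit (fun h => (g (t + h) - g t) / h) (step_dom a b t) _ _ 0);
    auto using step_dom_adh, deriv_on_limit.
Qed.

Lemma deriv_on_ext g h g' : (forall t, inI a b t -> g t = h t) -> deriv_on a b g g' -> deriv_on a b h g'.
Proof.
  intros E Hg t Ht eps Heps. destruct (Hg t Ht eps Heps) as [d [Hd K]].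
  exists d; split; auto. intros x Hx0 Hx Hxt. rewrite <- !E; auto.
Qed.

Lemma deriv_on_cont_on g g' : deriv_on a b g g' -> cont_on a b g.
Proof.
  intros Hg x. apply continuity_pt_intro. intros eps Heps.
  set (t := clamp a b x). assert (Ht : inI a b t) by (apply clamp_inI; lra).
  destruct (Hg t Ht 1 Rlt_0_1) as [d [Hd Hq]].
  set (K := Rabs (g' t) + 1). assert (HK : 0 < K) by (unfold K; pose proof (Rabs_pos (g' t)); lra).
  exists (Rmin d (eps / K)). split; [apply Rmin_pos; auto; apply Rdiv_lt_0_compat; auto|].
  intros y Hy. set (s := clamp a b y). fold t.
  assert (Hs : inI a b s) by (apply clamp_inI; lra).
  pose proof (clamp_lipschitz y x) as Hyx. fold s t in Hyx.
  pose proof (Rmin_l d (eps / K)); pose proof (Rmin_r d (eps / K)).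
  destruct (Req_dec (s - t) 0) as [E|E].
  - replace s with t by lra. rewrite Rminus_diag, Rabs_R0; auto.
  - assert (Hq' := Hq (s - t) E ltac:(lra) ltac:(replace (t + (s - t)) with s by ring; auto)).
    replace (t + (s - t)) with s in Hq' by ring.
    set (Q := (g s - g t) / (s - t)) in *.
    replace (g s - g t) with (Q * (s - t)) by (unfold Q; field; auto).
    rewrite Rabs_mult.
    assert (HQ : Rabs Q <= K).
    { unfold K. pose proof (Rabs_triang (Q - g' t) (g' t)) as Htri.
      replace (Q - g' t + g' t) with Q in Htri by ring. lra. }
    apply Rle_lt_trans with (K * Rabs (s - t)).
    + apply Rmult_le_compat_r; auto using Rabs_pos.
    + replace eps with (K * (eps / K)) by (field; lra). apply Rmult_lt_compat_l; lra.
Qed.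

Lemma smooth_on_cont_on g : smooth_on a b g -> cont_on a b g.
Proof.
  intros [D [D0 DS]]. apply (cont_on_ext (D O)); auto.
  exact (deriv_on_cont_on _ _ (DS O)).
Qed.

Lemma smooth_on_deriv_on g g' : smooth_on a b g -> deriv_on a b g g' -> smooth_on a b g'.
Proof.
  intros [D [D0 DS]] Hg. exists (fun k => D (S k)). split; [|intros k; apply DS].
  intros t Ht. apply (deriv_on_unique g); auto. apply (deriv_on_ext (D O)); auto.
Qed.

Lemma smooth_on_ex_deriv g : smooth_on a b g -> exists g', deriv_on a b g g' /\ smooth_on a b g'.
Proof.
  intros [D [D0 DS]]. exists (D 1%nat). split.
  - apply (deriv_on_ext (D O)); auto.
  - exists (fun k => D (S k)); split; auto.
Qed.

Lemma vsmooth_on_vcont_on F : vsmooth_on a b F -> vcont_on a b F.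
Proof. intros [? [? ?]]; repeat split; apply smooth_on_cont_on; auto. Qed.

Lemma vsmooth_on_vderiv_on F F' : vsmooth_on a b F -> vderiv_on a b F F' -> vsmooth_on a b F'.
Proof.
  intros [Sx [Sy Sz]] [Dx [Dy Dz]].
  repeat split; [exact (smooth_on_deriv_on _ _ Sx Dx)|exact (smooth_on_deriv_on _ _ Sy Dy)
                |exact (smooth_on_deriv_on _ _ Sz Dz)].
Qed.

Lemma vsmooth_on_ex_vderiv F : vsmooth_on a b F -> exists F', vderiv_on a b F F' /\ vsmooth_on a b F'.
Proof.
  intros [Hx [Hy Hz]].
  destruct (smooth_on_ex_deriv _ Hx) as [gx [Dx Sx]].
  destruct (smooth_on_ex_deriv _ Hy) as [gy [Dy Sy]].
  destruct (smooth_on_ex_deriv _ Hz) as [gz [Dz Sz]].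
  exists (fun t => mkV3 (gx t) (gy t) (gz t)). repeat split; auto.
Qed.

Lemma vderiv_on_dot_limit F F' w t : vderiv_on a b F F' -> inI a b t ->
  limit1_in (fun h => (vdot (F (t + h)) w - vdot (F t) w) / h) (step_dom a b t) (vdot (F' t) w) 0.
Proof.
  intros [Hx [Hy Hz]] Ht.
  pose proof (limit_plus _ _ _ _ _ _
    (limit_plus _ _ _ _ _ _
      (limit_mul _ _ _ _ _ _ (deriv_on_limit _ _ t Hx Ht) (limit1_in_const (vx w) _ 0))
      (limit_mul _ _ _ _ _ _ (deriv_on_limit _ _ t Hy Ht) (limit1_in_const (vy w) _ 0)))
    (limit_mul _ _ _ _ _ _ (deriv_on_limit _ _ t Hz Ht) (limit1_in_const (vz w) _ 0))) as L.
  simpl in L. unfold vdot. eapply limit1_in_ext; [|exact L].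
  intros h [Hh _]. field. exact Hh.
Qed.

(* Differentiating [F·F = 1]. *)
Lemma vderiv_on_unit_orth F F' t : vderiv_on a b F F' ->
  (forall s, inI a b s -> vdot (F s) (F s) = 1) -> inI a b t -> vdot (F t) (F' t) = 0.
Proof.
  intros HF Hunit Ht. pose proof HF as [Hx [Hy Hz]].
  assert (Lsum : forall g g', deriv_on a b g g' ->
    limit1_in (fun h => (g (t + h) + g t) * ((g (t + h) - g t) / h)) (step_dom a b t)
      ((g t + g t) * g' t) 0).
  { intros g g' Hg. apply limit_mul; [|exact (deriv_on_limit _ _ t Hg Ht)].
    apply limit_plus; [exact (cont_on_limit _ t (deriv_on_cont_on _ _ Hg) Ht)|apply limit1_in_const]. }
  pose proof (limit_plus _ _ _ _ _ _ (limit_plus _ _ _ _ _ _ (Lsum _ _ Hx) (Lsum _ _ Hy)) (Lsum _ _ Hz)) as L.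
  assert (L0 : limit1_in (fun h => (vx (F (t + h)) + vx (F t)) * ((vx (F (t + h)) - vx (F t)) / h)
      + (vy (F (t + h)) + vy (F t)) * ((vy (F (t + h)) - vy (F t)) / h)
      + (vz (F (t + h)) + vz (F t)) * ((vz (F (t + h)) - vz (F t)) / h)) (step_dom a b t) 0 0).
  { apply (limit1_in_ext (fun _ => 0)); [|apply limit1_in_const].
    intros h [Hh0 Hh]. pose proof (Hunit _ Hh) as E1. pose proof (Hunit _ Ht) as E0.
    unfold vdot in E0, E1.
    transitivity ((vx (F (t + h)) * vx (F (t + h)) + vy (F (t + h)) * vy (F (t + h))
      + vz (F (t + h)) * vz (F (t + h)) - (vx (F t) * vx (F t) + vy (F t) * vy (F t)
      + vz (F t) * vz (F t))) / h); [rewrite E0, E1; field; exact Hh0|field; exact Hh0]. }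
  pose proof (single_limit _ _ _ _ _ (step_dom_adh t Ht) L L0). unfold vdot. lra.
Qed.

Lemma vderiv_on_scaled_orth G G' F F' k w t : vderiv_on a b G G' -> vderiv_on a b F F' ->
  cont_on a b k -> (forall s, inI a b s -> G s = vscale (k s) (F s)) -> inI a b t ->
  vdot (F t) w = 0 -> vdot (G' t) w = k t * vdot (F' t) w.
Proof.
  intros HG HF Hk EG Ht Hw.
  apply (single_limit (fun h => (vdot (G (t + h)) w - vdot (G t) w) / h) (step_dom a b t) _ _ 0
    (step_dom_adh t Ht) (vderiv_on_dot_limit _ _ w t HG Ht)).
  apply (limit1_in_ext (fun h => k (t + h) * ((vdot (F (t + h)) w - vdot (F t) w) / h))).
  - intros h [Hh0 Hh]. rewrite (EG _ Hh), (EG _ Ht), Hw.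
    replace (vdot (vscale (k t) (F t)) w) with (k t * vdot (F t) w)
      by (unfold vdot, vscale; simpl; ring).
    rewrite Hw. unfold vdot, vscale; simpl. field. exact Hh0.
  - exact (limit_mul _ _ _ _ _ _ (cont_on_limit _ t Hk Ht) (vderiv_on_dot_limit _ _ w t HF Ht)).
Qed.

Lemma deriv_on_is_derive f f' x : deriv_on a b f f' -> a < x < b ->
  is_derive (fun s => f (clamp a b s)) x (f' x).
Proof.
  intros Hf Hx. apply is_derive_Reals. intros e He.
  destruct (Hf x ltac:(unfold inI; lra) e He) as [d [Hd Kd]].
  assert (Hp : 0 < Rmin d (Rmin (x - a) (b - x))) by (repeat apply Rmin_pos; lra).
  exists (mkposreal _ Hp). intros h Hh0 Hh. simpl in Hh.
  pose proof (Rmin_l d (Rmin (x - a) (b - x))); pose proof (Rmin_r d (Rmin (x - a) (b - x))).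
  pose proof (Rmin_l (x - a) (b - x)); pose proof (Rmin_r (x - a) (b - x)).
  assert (Hxh : inI a b (x + h)) by (unfold inI; apply Rabs_lt_between in Hh; lra).
  rewrite (clamp_id (x + h) Hxh), (clamp_id x ltac:(unfold inI; lra)).
  apply Kd; auto; lra.
Qed.

Lemma deriv_on_taylor f f' : deriv_on a b f f' -> cont_on a b f' ->
  forall eps, 0 < eps -> exists rho, 0 < rho /\ forall t t', inI a b t -> inI a b t' ->
  Rabs (t' - t) < rho -> Rabs (f t' - f t - (t' - t) * f' t) <= eps * Rabs (t' - t).
Proof.
  intros Hf Hf' eps Heps. destruct (cont_on_unif _ Hf' eps Heps) as [r [Hr K]].
  exists r; split; auto. intros t t' Ht Ht' Htt.
  destruct (MVT_gen (fun s => f (clamp a b s)) t t' (fun s => f' (clamp a b s))) as [z [Hz Ez]].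
  - intros x Hx. rewrite (clamp_id x); [apply deriv_on_is_derive; auto|];
      unfold inI in *; unfold Rmin, Rmax in Hx; destruct Rle_dec; lra.
  - intros x _. exact (deriv_on_cont_on _ _ Hf x).
  - assert (Hzi : inI a b z) by (unfold inI in *; unfold Rmin, Rmax in Hz; destruct Rle_dec; lra).
    rewrite !clamp_id in Ez by auto.
    assert (Hzt : Rabs (z - t) < r).
    { apply Rle_lt_trans with (Rabs (t' - t)); auto.
      unfold Rmin, Rmax in Hz; destruct Rle_dec; unfold Rabs; repeat destruct Rcase_abs; lra. }
    pose proof (K t z Ht Hzi Hzt) as Kz.
    rewrite Ez. replace (f' z * (t' - t) - (t' - t) * f' t) with ((t' - t) * (f' z - f' t)) by ring.
    rewrite Rabs_mult, (Rmult_comm eps). apply Rmult_le_compat_l; [apply Rabs_pos|lra].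
Qed.

Lemma vderiv_on_taylor F F' : vderiv_on a b F F' -> vcont_on a b F' ->
  forall eps, 0 < eps -> exists rho, 0 < rho /\ forall t t', inI a b t -> inI a b t' ->
  Rabs (t' - t) < rho ->
  vnorm1 (vsub (vsub (F t') (F t)) (vscale (t' - t) (F' t))) <= eps * Rabs (t' - t).
Proof.
  intros [Hx [Hy Hz]] [Cx [Cy Cz]] eps Heps.
  destruct (deriv_on_taylor _ _ Hx Cx (eps / 3)) as [r1 [Hr1 T1]]; [lra|].
  destruct (deriv_on_taylor _ _ Hy Cy (eps / 3)) as [r2 [Hr2 T2]]; [lra|].
  destruct (deriv_on_taylor _ _ Hz Cz (eps / 3)) as [r3 [Hr3 T3]]; [lra|].
  exists (Rmin r1 (Rmin r2 r3)). split; [repeat apply Rmin_pos; auto|].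
  intros t t' Ht Ht' Htt.
  pose proof (Rmin_l r1 (Rmin r2 r3)); pose proof (Rmin_r r1 (Rmin r2 r3)).
  pose proof (Rmin_l r2 r3); pose proof (Rmin_r r2 r3).
  pose proof (T1 t t' Ht Ht' ltac:(lra)); pose proof (T2 t t' Ht Ht' ltac:(lra)).
  pose proof (T3 t t' Ht Ht' ltac:(lra)).
  unfold vnorm1, vsub, vscale; simpl; lra.
Qed.

Lemma vderiv_on_vcont_on F F' : vderiv_on a b F F' -> vcont_on a b F.
Proof. intros [Hx [Hy Hz]]; repeat split; eapply deriv_on_cont_on; eauto. Qed.

Lemma cont_on_vnorm1_sub F G : vcont_on a b F -> vcont_on a b G ->
  cont_on a b (fun t => vnorm1 (vsub (F t) (G t))).
Proof.
  intros [Fx [Fy Fz]] [Gx [Gy Gz]]. unfold vnorm1, vsub; simpl.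
  repeat apply cont_on_plus; apply cont_on_comp; try apply Rcontinuity_abs; apply cont_on_minus; auto.
Qed.

(* The lower bound is attained along [t |-> min_s g t s], continuous by the equicontinuity. *)
Lemma cont_on_joint_lower_bound (g : R -> R -> R) : (forall t, cont_on a b (g t)) ->
  (forall eps, 0 < eps -> exists d, 0 < d /\ forall t1 t2 s, inI a b t1 -> inI a b t2 ->
     inI a b s -> Rabs (t1 - t2) < d -> g t1 s <= g t2 s + eps) ->
  (forall t s, inI a b t -> inI a b s -> 0 < g t s) ->
  exists m, 0 < m /\ forall t s, inI a b t -> inI a b s -> m <= g t s.
Proof.
  intros Hg Hequi Hpos.
  set (P := fun t m => inI a b m /\ forall s, inI a b s -> g t m <= g t s).
  set (M := fun t => epsilon (inhabits a) (P t)).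
  assert (HM : forall t, P t (M t)) by (intros t; apply epsilon_spec, cont_on_argmin, Hg).
  set (mu := fun t => g t (M t)).
  assert (Hmu : cont_on a b mu).
  { intros x. apply continuity_pt_intro. intros eps Heps.
    destruct (Hequi (eps / 2)) as [d [Hd K]]; [lra|].
    exists d; split; [exact Hd|]. intros y Hy.
    pose proof (clamp_lipschitz y x) as Hyx.
    set (s := clamp a b y) in *. set (t := clamp a b x) in *.
    assert (Hs : inI a b s) by apply clamp_inI. assert (Ht : inI a b t) by apply clamp_inI.
    destruct (HM s) as [HMs Hmins]. destruct (HM t) as [HMt Hmint].
    pose proof (Hmins (M t) HMt). pose proof (Hmint (M s) HMs).
    pose proof (K s t (M t) Hs Ht HMt ltac:(lra)).
    pose proof (K t s (M s) Ht Hs HMs ltac:(rewrite Rabs_minus_sym; lra)).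
    unfold mu. apply Rabs_lt_between'; split; lra. }
  destruct (cont_on_pos_lower_bound mu Hmu) as [m [Hm Kmu]].
  { intros t Ht. apply Hpos; [exact Ht|apply HM]. }
  exists m; split; [exact Hm|]. intros t s Ht Hs.
  apply Rle_trans with (mu t); [apply Kmu, Ht|apply (HM t), Hs].
Qed.

(* Penalising near pairs by [max 0 (rho - |t - s|)] makes the distance positive everywhere. *)
Lemma vcont_on_separated F : vcont_on a b F ->
  (forall t t', inI a b t -> inI a b t' -> F t = F t' -> t = t') ->
  forall rho, 0 < rho -> exists del, 0 < del /\ forall t t', inI a b t -> inI a b t' ->
  rho <= Rabs (t - t') -> del <= vnorm1 (vsub (F t) (F t')).
Proof.
  intros HF Hinj rho Hrho.
  destruct (cont_on_joint_lower_bound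
    (fun t s => vnorm1 (vsub (F t) (F s)) + Rmax 0 (rho - Rabs (t - s)))) as [del [Hdel Kdel]].
  - intros t. apply cont_on_plus.
    + apply cont_on_vnorm1_sub; [repeat split; apply cont_on_const|exact HF].
    + apply cont_on_comp; [exact continuity_Rmax_0|].
      apply cont_on_minus; [apply cont_on_const|]. apply cont_on_comp; [apply Rcontinuity_abs|].
      apply cont_on_minus; [apply cont_on_const|]. intros x. apply clamp_continuous.
  - intros eps Heps. destruct (vcont_on_unif _ HF (eps / 2)) as [r [Hr K]]; [lra|].
    exists (Rmin r (eps / 2)); split; [apply Rmin_pos; lra|]. intros t1 t2 s Ht1 Ht2 Hs Ht12.
    pose proof (Rmin_l r (eps / 2)); pose proof (Rmin_r r (eps / 2)).
    pose proof (K t2 t1 Ht2 Ht1 ltac:(lra)).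
    pose proof (vnorm1_sub_triangle (F t1) (F t2) (F s)).
    pose proof (Rmax_0_lipschitz (rho - Rabs (t1 - s)) (rho - Rabs (t2 - s))).
    pose proof (Rle_abs (Rmax 0 (rho - Rabs (t1 - s)) - Rmax 0 (rho - Rabs (t2 - s)))).
    assert (Rabs (rho - Rabs (t1 - s) - (rho - Rabs (t2 - s))) <= Rabs (t1 - t2))
      by (unfold Rabs; repeat destruct Rcase_abs; lra).
    lra.
  - intros t s Ht Hs. pose proof (vnorm1_ge0 (vsub (F t) (F s))).
    destruct (Rlt_dec (Rabs (t - s)) rho) as [Hnear|Hfar].
    + pose proof (Rmax_r 0 (rho - Rabs (t - s))). lra.
    + pose proof (Rmax_l 0 (rho - Rabs (t - s))).
      assert (Hne : F t <> F s).
      { intros E. apply Hfar. rewrite (Hinj _ _ Ht Hs E), Rminus_diag, Rabs_R0. exact Hrho. }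
      pose proof (vnorm1_sub_gt0 _ _ Hne). lra.
  - exists del; split; [exact Hdel|]. intros t t' Ht Ht' Htt.
    pose proof (Kdel t t' Ht Ht') as K. rewrite Rmax_left in K by lra. lra.
Qed.

End Interval.

(** * Developable strips along the curve *)

Lemma sin_dev_beta_pos c1 c2 nd A Ad t : 0 < sin (dev_beta c1 c2 nd A Ad t).
Proof.
  unfold dev_beta. match goal with |- context [atan ?u] => pose proof (atan_bound u) end.
  pose proof PI_RGT_0. apply sin_gt_0; lra.
Qed.

Section DevelopableStrip.
Variables (a b : R) (c c1 c2 c3 nd : R -> V3) (al ald : R -> R).
Hypotheses (Hab : a < b)
  (Hc1 : vderiv_on a b c c1) (Hc2 : vderiv_on a b c1 c2)
  (Hc3 : vderiv_on a b c2 c3) (Hc3_cont : vcont_on a b c3)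
  (Harc : forall t, inI a b t -> vnorm (c1 t) = 1)
  (Hkappa : forall t, inI a b t -> 0 < curvature c2 t)
  (Hnd : vderiv_on a b (frenet_n c2) nd)
  (Hemb : forall t t', inI a b t -> inI a b t' -> c t = c t' -> t = t')
  (Hald : deriv_on a b al ald) (Hald_cont : cont_on a b ald)
  (Hal_range : forall t, inI a b t -> 0 < Rabs (al t) < PI / 2).

Lemma frenet_e_unit t : inI a b t -> vdot (c1 t) (c1 t) = 1.
Proof.
  intros Ht. pose proof (Harc t Ht) as H. unfold vnorm in H.
  rewrite <- (sqrt_sqrt (vdot (c1 t) (c1 t))) by apply vdot_self_ge0. rewrite H; ring.
Qed.

Lemma frenet_n_unit t : inI a b t -> vdot (frenet_n c2 t) (frenet_n c2 t) = 1.
Proof.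
  intros Ht. pose proof (Hkappa t Ht) as Hk.
  assert (E : vdot (c2 t) (c2 t) = curvature c2 t ^ 2)
    by (unfold curvature, vnorm; rewrite pow2_sqrt; auto using vdot_self_ge0).
  transitivity ((/ curvature c2 t) ^ 2 * vdot (c2 t) (c2 t));
    [unfold frenet_n, vscale, vdot; simpl; ring|rewrite E; field; lra].
Qed.

Lemma frenet_e_n_orth t : inI a b t -> vdot (c1 t) (frenet_n c2 t) = 0.
Proof.
  intros Ht. pose proof (vderiv_on_unit_orth a b Hab c1 c2 t Hc2 frenet_e_unit Ht) as H.
  transitivity (/ curvature c2 t * vdot (c1 t) (c2 t)); [unfold frenet_n, vscale, vdot; simpl; ring|].
  rewrite H; ring.
Qed.

Lemma curvature_cont_on : cont_on a b (curvature c2).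
Proof.
  pose proof (vderiv_on_vcont_on a b Hab _ _ Hc3) as Hc2_cont.
  apply (cont_on_sqrt a b Hab); [apply cont_on_vdot|intros; apply vdot_self_ge0]; auto.
Qed.

Lemma frenet_n_vcont_on : vcont_on a b (frenet_n c2).
Proof.
  apply vcont_on_scale; [|exact (vderiv_on_vcont_on a b Hab _ _ Hc3)].
  apply (cont_on_inv a b Hab); [exact curvature_cont_on|intros t Ht; pose proof (Hkappa t Ht); lra].
Qed.

Lemma frenet_b_vcont_on : vcont_on a b (frenet_b c1 c2).
Proof. apply vcont_on_cross; [exact (vderiv_on_vcont_on a b Hab _ _ Hc2)|exact frenet_n_vcont_on]. Qed.

(* Only the existence of [n'] is assumed; this identity makes the torsion continuous. *)
Lemma c3_dot_binormal t : inI a b t ->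
  vdot (c3 t) (frenet_b c1 c2 t) = curvature c2 t * torsion c1 c2 nd t.
Proof.
  intros Ht. apply (vderiv_on_scaled_orth a b Hab c2 c3 (frenet_n c2) nd); auto.
  - exact curvature_cont_on.
  - intros s Hs. pose proof (Hkappa s Hs).
    unfold frenet_n, vscale; destruct (c2 s); simpl; f_equal; field; lra.
  - unfold frenet_b, frenet_e; destruct (c1 t), (frenet_n c2 t); unfold vdot, vcross; simpl; ring.
Qed.

Lemma torsion_cont_on : cont_on a b (torsion c1 c2 nd).
Proof.
  apply (cont_on_ext a b Hab (fun t => vdot (c3 t) (frenet_b c1 c2 t) / curvature c2 t)).
  - intros t Ht. rewrite c3_dot_binormal by exact Ht. pose proof (Hkappa t Ht). field; lra.
  - apply (cont_on_div a b Hab); [apply cont_on_vdot; auto using frenet_b_vcont_on|exact curvature_cont_on|].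
    intros t Ht; pose proof (Hkappa t Ht); lra.
Qed.

Lemma dev_beta_cont_on A Ad : cont_on a b A -> cont_on a b Ad ->
  (forall t, inI a b t -> sin (A t) <> 0) -> cont_on a b (dev_beta c1 c2 nd A Ad).
Proof.
  intros HA HAd HsA. unfold dev_beta.
  apply cont_on_minus; [apply cont_on_const|]. apply cont_on_comp; [exact continuity_atan|].
  apply (cont_on_div a b Hab); [apply cont_on_plus; auto using torsion_cont_on|
    apply cont_on_mult; [exact curvature_cont_on|apply cont_on_comp; auto using continuity_sin]|].
  intros t Ht. apply Rmult_integral_contrapositive; split; auto. pose proof (Hkappa t Ht); lra.
Qed.

Lemma ruling_vcont_on A be : cont_on a b A -> cont_on a b be -> vcont_on a b (ruling c1 c2 A be).
Proof.
  intros HA Hbe. pose proof (vderiv_on_vcont_on a b Hab _ _ Hc2) as He.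
  unfold ruling; apply vcont_on_add; apply vcont_on_scale;
    auto using cont_on_comp, continuity_cos, continuity_sin.
  apply vcont_on_add; apply vcont_on_scale;
    auto using cont_on_comp, continuity_cos, continuity_sin, frenet_n_vcont_on, frenet_b_vcont_on.
Qed.

Lemma ruling_frame_vec A be t : ruling c1 c2 A be t =
  frame_vec (c1 t) (frenet_n c2 t) (cos (be t)) (sin (be t)) (cos (A t)) (sin (A t)).
Proof. reflexivity. Qed.

Lemma ruling_unit A be t : inI a b t -> vdot (ruling c1 c2 A be t) (ruling c1 c2 A be t) = 1.
Proof.
  intros Ht. rewrite ruling_frame_vec, frame_vec_dot_self
    by auto using frenet_e_unit, frenet_n_unit, frenet_e_n_orth.
  pose proof (sin2_cos2 (A t)); pose proof (sin2_cos2 (be t)). unfold Rsqr in *. nra.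
Qed.

Lemma ruling_dot_e A be t : inI a b t -> vdot (c1 t) (ruling c1 c2 A be t) = cos (be t).
Proof.
  intros Ht. rewrite ruling_frame_vec, frame_vec_dot_e
    by auto using frenet_e_unit, frenet_n_unit, frenet_e_n_orth.
  reflexivity.
Qed.

Lemma ruling_cross_e A be t : inI a b t ->
  vdot (vcross (c1 t) (ruling c1 c2 A be t)) (vcross (c1 t) (ruling c1 c2 A be t)) = sin (be t) ^ 2.
Proof.
  intros Ht. rewrite vcross_dot_self, frenet_e_unit, ruling_unit, ruling_dot_e by exact Ht.
  pose proof (sin2_cos2 (be t)). unfold Rsqr in *. nra.
Qed.

Lemma ruling_triple be1 be2 t : inI a b t ->
  vdot (vcross (c1 t) (ruling c1 c2 al be1 t)) (ruling c1 c2 (fun s => - al s) be2 t)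
  = - 2 * sin (be1 t) * sin (be2 t) * (sin (al t) * cos (al t)).
Proof.
  intros Ht. rewrite !ruling_frame_vec, frame_vec_triple
    by auto using frenet_e_unit, frenet_n_unit, frenet_e_n_orth.
  rewrite sin_neg, cos_neg. ring.
Qed.

Lemma ruled_intersection_small W th : vcont_on a b W -> (forall s, inI a b s -> vbounded 1 (W s)) ->
  0 < th -> exists del, 0 < del /\ forall t t' v v' u, inI a b t -> inI a b t' -> vbounded 1 u ->
  3 * (Rabs v + Rabs v') < del -> vadd (c t) (vscale v u) = vadd (c t') (vscale v' (W t')) ->
  vnorm1 (vadd (vscale (t' - t) (c1 t)) (vadd (vscale v' (W t)) (vscale (- v) u)))
  <= th * (Rabs (t' - t) + Rabs v').
Proof.
  intros HW HW1 Hth.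
  destruct (vderiv_on_taylor a b Hab c c1 Hc1 (vderiv_on_vcont_on a b Hab _ _ Hc2) th Hth)
    as [r1 [Hr1 Htaylor]].
  destruct (vcont_on_unif a b W HW th Hth) as [r2 [Hr2 Hunif]].
  destruct (vcont_on_separated a b Hab c (vderiv_on_vcont_on a b Hab _ _ Hc1) Hemb (Rmin r1 r2))
    as [del [Hdel Hsep]]; [apply Rmin_pos; auto|].
  exists del; split; auto. intros t t' v v' u Ht Ht' Hu Hsmall Heq.
  pose proof (Rmin_l r1 r2); pose proof (Rmin_r r1 r2).
  apply (ruled_intersection_linearized c (c1 t) u (W t) (W t') t t' v v' (Rmin r1 r2) del th);
    auto; intros; [apply Htaylor|apply Hunif]; auto; lra.
Qed.

Lemma al_cont_on : cont_on a b al.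
Proof. exact (deriv_on_cont_on a b Hab _ _ Hald). Qed.

Let xi := ruling c1 c2 al (dev_beta c1 c2 nd al ald).
Let xi_dual := ruling c1 c2 (fun s => - al s) (dev_beta c1 c2 nd (fun s => - al s) (fun s => - ald s)).

Lemma dev_beta_al_cont_on : cont_on a b (dev_beta c1 c2 nd al ald).
Proof.
  apply dev_beta_cont_on; auto using al_cont_on. intros t Ht; apply sin_cos_neq0, Hal_range, Ht.
Qed.

Lemma dev_beta_dual_cont_on : cont_on a b (dev_beta c1 c2 nd (fun s => - al s) (fun s => - ald s)).
Proof.
  apply dev_beta_cont_on; auto using cont_on_opp, al_cont_on.
  intros t Ht. rewrite sin_neg. pose proof (sin_cos_neq0 _ (Hal_range t Ht)). lra.
Qed.

Lemma xi_vcont_on : vcont_on a b xi.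
Proof. apply ruling_vcont_on; auto using al_cont_on, dev_beta_al_cont_on. Qed.

Lemma xi_dual_vcont_on : vcont_on a b xi_dual.
Proof. apply ruling_vcont_on; auto using cont_on_opp, al_cont_on, dev_beta_dual_cont_on. Qed.

Lemma strip_frame_bounds : exists m1 m2, 0 < m1 /\ 0 < m2 /\ forall t, inI a b t ->
  m1 <= vdot (vcross (c1 t) (xi t)) (vcross (c1 t) (xi t)) /\
  m1 <= vdot (vcross (c1 t) (xi_dual t)) (vcross (c1 t) (xi_dual t)) /\
  m2 <= Rabs (vdot (vcross (c1 t) (xi t)) (xi_dual t)).
Proof.
  destruct (cont_on_pos_lower_bound a b Hab (fun t => sin (dev_beta c1 c2 nd al ald t)))
    as [mb [Hmb Kb]]; auto using cont_on_comp, continuity_sin, dev_beta_al_cont_on, sin_dev_beta_pos.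
  destruct (cont_on_pos_lower_bound a b Hab
      (fun t => sin (dev_beta c1 c2 nd (fun s => - al s) (fun s => - ald s) t)))
    as [md [Hmd Kd]]; auto using cont_on_comp, continuity_sin, dev_beta_dual_cont_on, sin_dev_beta_pos.
  destruct (cont_on_pos_lower_bound a b Hab (fun t => Rabs (sin (al t) * cos (al t))))
    as [ma [Hma Ka]].
  { apply cont_on_comp; [exact Rcontinuity_abs|].
    apply cont_on_mult; apply cont_on_comp; auto using continuity_sin, continuity_cos, al_cont_on. }
  { intros t Ht. destruct (sin_cos_neq0 _ (Hal_range t Ht)).
    apply Rabs_pos_lt, Rmult_integral_contrapositive; split; lra. }
  exists (Rmin mb md ^ 2), (2 * mb * md * ma).
  split; [apply pow_lt, Rmin_pos; auto|].
  split; [repeat apply Rmult_lt_0_compat; lra|].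
  intros t Ht. unfold xi, xi_dual.
  rewrite !ruling_cross_e, ruling_triple by exact Ht.
  pose proof (Kb t Ht); pose proof (Kd t Ht); pose proof (Ka t Ht).
  pose proof (Rmin_l mb md); pose proof (Rmin_r mb md); pose proof (Rmin_pos _ _ Hmb Hmd).
  rewrite !Rabs_mult in *. replace (Rabs (-2)) with 2 by (rewrite Rabs_left; lra).
  rewrite (Rabs_pos_eq (sin (dev_beta _ _ _ al _ t))) by (apply Rlt_le, sin_dev_beta_pos).
  rewrite (Rabs_pos_eq (sin (dev_beta _ _ _ (fun s => - al s) _ t))) by (apply Rlt_le, sin_dev_beta_pos).
  set (sb := sin (dev_beta c1 c2 nd al ald t)) in *.
  set (sd := sin (dev_beta c1 c2 nd (fun s => - al s) (fun s => - ald s) t)) in *.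
  assert (mb * md <= sb * sd) by (apply Rmult_le_compat; lra).
  assert (mb * md * ma <= sb * sd * (Rabs (sin (al t)) * Rabs (cos (al t))))
    by (apply Rmult_le_compat; nra).
  repeat split; nra.
Qed.

Lemma xi_bounded s : inI a b s -> vbounded 1 (xi s).
Proof. intros Hs; apply vunit_bounded, ruling_unit, Hs. Qed.

Lemma xi_dual_bounded s : inI a b s -> vbounded 1 (xi_dual s).
Proof. intros Hs; apply vunit_bounded, ruling_unit, Hs. Qed.

Theorem S_set_empty : exists eps0, 0 < eps0 /\ forall eps, 0 < eps < eps0 ->
  forall t v, ~ S_set a b eps c c1 c2 nd al ald t v.
Proof.
  destruct strip_frame_bounds as [m1 [m2 [Hm1 [Hm2 Hbounds]]]].
  destruct (small_threshold m1 m2 Hm1 Hm2) as [th [Hth [Hth2 Hth1]]].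
  destruct (ruled_intersection_small xi th xi_vcont_on xi_bounded Hth) as [dx [Hdx Kx]].
  destruct (ruled_intersection_small xi_dual th xi_dual_vcont_on xi_dual_bounded Hth) as [dd [Hdd Kd]].
  exists (Rmin dx dd / 6); split; [pose proof (Rmin_pos _ _ Hdx Hdd); lra|].
  intros eps [Heps0 Heps] t v [[Ht Hv] [t' [v' [[Ht' Hv'] [Hne Heq]]]]].
  assert (Rabs v < eps) by (apply Rabs_def1; lra).
  assert (Rabs v' < eps) by (apply Rabs_def1; lra).
  pose proof (Rmin_l dx dd); pose proof (Rmin_r dx dd).
  pose proof (vunit_bounded _ (frenet_e_unit t Ht)) as He.
  destruct (Hbounds t Ht) as [Bx [Bd Bdet]].
  assert (Cx : Rabs (vdot (c1 t) (xi t)) <= 1)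
    by (unfold xi; rewrite ruling_dot_e by exact Ht; apply Rabs_le, COS_bound).
  assert (Cd : Rabs (vdot (c1 t) (xi_dual t)) <= 1)
    by (unfold xi_dual; rewrite ruling_dot_e by exact Ht; apply Rabs_le, COS_bound).
  (* Same signs of [v], [v']: two different rulings meet; opposite signs: a ruling meets itself. *)
  unfold phi_map, psi_map in Heq.
  destruct (Rle_dec 0 v) as [Hv0|Hv0]; destruct (Rle_dec 0 v') as [Hv0'|Hv0'].
  - pose proof (Kd t t' v v' _ Ht Ht' (xi_bounded t Ht) ltac:(lra) Heq) as Hy.
    destruct (small_comb3_zero _ _ _ _ _ _ _ _ He (xi_bounded t Ht) (xi_dual_bounded t Ht) Bdet
      (Rlt_le _ _ Hth) Hth2 Hy) as [Es [Ep Eq]].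
    apply Hne. f_equal; lra.
  - apply (small_comb2_same_side _ _ _ _ _ _ _ (xi_bounded t Ht) (frenet_e_unit t Ht) Cx Hm1 Bx
      Hth1 (Rlt_le _ _ Hth) (Kx t t' v v' _ Ht Ht' (xi_bounded t Ht) ltac:(lra) Heq)); lra.
  - apply (small_comb2_same_side _ _ _ _ _ _ _ (xi_dual_bounded t Ht) (frenet_e_unit t Ht) Cd Hm1 Bd
      Hth1 (Rlt_le _ _ Hth) (Kd t t' v v' _ Ht Ht' (xi_dual_bounded t Ht) ltac:(lra) Heq)); lra.
  - pose proof (Kx t t' v v' _ Ht Ht' (xi_dual_bounded t Ht) ltac:(lra) Heq) as Hy.
    rewrite vtriple_swap, Rabs_Ropp in Bdet.
    destruct (small_comb3_zero _ _ _ _ _ _ _ _ He (xi_dual_bounded t Ht) (xi_bounded t Ht) Bdet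
      (Rlt_le _ _ Hth) Hth2 Hy) as [Es [Ep Eq]].
    apply Hne. f_equal; lra.
Qed.

End DevelopableStrip.

Theorem lemma1p1
  (a b : R) (c c1 c2 nd : R -> V3) (al ald : R -> R)
  (Hab : a < b)
  (Hc_smooth : vsmooth_on a b c)
  (Hc1 : vderiv_on a b c c1)
  (Hc2 : vderiv_on a b c1 c2)
  (Harc : forall t, inI a b t -> vnorm (c1 t) = 1)
  (Hkappa : forall t, inI a b t -> 0 < curvature c2 t)
  (Hnd : vderiv_on a b (frenet_n c2) nd)
  (Hemb : forall t t', inI a b t -> inI a b t' -> c t = c t' -> t = t')
  (Hal_smooth : smooth_on a b al)
  (Hald : deriv_on a b al ald)
  (Hal_range : forall t, inI a b t -> 0 < Rabs (al t) < PI / 2) :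
  exists eps0, 0 < eps0 /\
    forall eps, 0 < eps < eps0 ->
      forall t v, ~ interior_point (S_set a b eps c c1 c2 nd al ald) t v.
Proof.
  pose proof (vsmooth_on_vderiv_on a b Hab c c1 Hc_smooth Hc1) as Hc1_smooth.
  pose proof (vsmooth_on_vderiv_on a b Hab c1 c2 Hc1_smooth Hc2) as Hc2_smooth.
  destruct (vsmooth_on_ex_vderiv a b c2 Hc2_smooth) as [c3 [Hc3 Hc3_smooth]].
  pose proof (smooth_on_cont_on a b Hab ald (smooth_on_deriv_on a b Hab al ald Hal_smooth Hald))
    as Hald_cont.
  destruct (S_set_empty a b c c1 c2 c3 nd al ald Hab Hc1 Hc2 Hc3
    (vsmooth_on_vcont_on a b Hab c3 Hc3_smooth) Harc Hkappa Hnd Hemb Hald Hald_cont Hal_range)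
    as [eps0 [Heps0 Hempty]].
  exists eps0; split; [exact Heps0|]. intros eps Heps t v [r [Hr Hball]].
  apply (Hempty eps Heps t v), Hball.
  rewrite !Rminus_diag, pow_i, Rplus_0_r, sqrt_0 by lia. exact Hr.
Qed.
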